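(* Let $\mathcal{G}$ be a bottleneck routing game and let $f$ be any subpath-optimal Nash flow of $\mathcal{G}$. Then $B(f)=B^*(\mathcal{G})$.
   Context: A bottleneck routing game is $\mathcal{G}=(G(V,E),(c_e)_{e\in E},r)$: $G$ is a directed network with origin $s$ and destination $t$, each edge $e$ has a continuous non-decreasing latency function $c_e:[0,r]\to\mathbb{R}_{\ge0}$, and $r>0$ is the traffic rate. A flow is a nonnegative vector $f$ indexed by the simple $s$–$t$ paths with $\sum_p f_p=r$; $f_e=\sum_{p\ni e}f_p$; $b_p(f)=\max_{e\in p}c_e(f_e)$ for any path $p$; $B(f)=\max_{p:f_p>0}b_p(f)$. $B^*(\mathcal{G})=\min_f B(f)$ over feasible flows. $f$ is a Nash flow if for all $s$–$t$ paths $p,p'$ with $f_p>0$, $b_p(f)\le b_{p'}(f)$. For a flow $f$ and vertex $u$, $b_f(u)$ denotes the minimum over all $s$–$u$ paths $q$ of $\max_{e\in q}c_e(f_e)$. A flow $f$ is a subpath-optimal Nash flow if it is a Nash flow and for every vertex $u$ and every $s$–$t$ path $p$ with $f_p>0$ containing $u$, the bottleneck cost $\max_e c_e(f_e)$ over the edges of the $s$–$u$ part of $p$ equals $b_f(u)$. *)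

From HB Require Import structures.
From mathcomp Require Import all_boot all_order all_algebra.
From mathcomp Require Import all_classical all_reals all_analysis.
Set Implicit Arguments. Unset Strict Implicit. Unset Printing Implicit Defensive.
Import Order.TTheory GRing.Theory Num.Theory numFieldNormedType.Exports.
Local Open Scope ring_scope.

Section Bottleneck.
Variables (V E : finType) (src tgt : E -> V).

Fixpoint walk (x y : V) (p : seq E) : bool :=
  match p with
  | [::] => x == y
  | e :: p' => (src e == x) && walk (tgt e) y p'
  end.

Definition verts (x : V) (p : seq E) : seq V := x :: map tgt p.

Definition simple_path (x y : V) (p : seq E) : bool :=
  walk x y p && uniq (verts x p).

(* all edge sequences of length at most #|E| (simple paths have distinct
   edges, hence are among them) *)
Definition short_seqs : seq (seq E) :=
  flatten [seq [seq tval t | t : k.-tuple E] | k <- iota 0 #|E|.+1].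

Definition spaths (x y : V) : seq (seq E) :=
  undup [seq p <- short_seqs | simple_path x y p].

Variable R : realType.

(* A path flow is a function from edge sequences to R; only simple s–t paths
   may carry flow. *)
Definition is_flow (s t : V) (r : R) (f : seq E -> R) : Prop :=
  [/\ forall p, 0 <= f p,
      forall p, p \notin spaths s t -> f p = 0
    & \sum_(p <- spaths s t) f p = r].

Definition eload (s t : V) (f : seq E -> R) (e : E) : R :=
  \sum_(p <- spaths s t | e \in p) f p.

(* bottleneck cost of an edge sequence q: max_{e in q} c_e(f_e)
   (0 for the empty sequence; all costs are >= 0) *)
Definition bneck (c : E -> R -> R) (s t : V) (f : seq E -> R) (q : seq E) : R :=
  \big[Num.max/0]_(e <- q) c e (eload s t f e).

Definition Bcost (c : E -> R -> R) (s t : V) (f : seq E -> R) : R :=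
  \big[Num.max/0]_(p <- spaths s t | 0 < f p) bneck c s t f p.

Definition is_Nash (c : E -> R -> R) (s t : V) (r : R) (f : seq E -> R) : Prop :=
  is_flow s t r f /\
  forall p p', p \in spaths s t -> p' \in spaths s t -> 0 < f p ->
    bneck c s t f p <= bneck c s t f p'.

Definition minseq (l : seq R) : R := foldr Num.min (head 0 l) l.

Definition bf (c : E -> R -> R) (s t : V) (f : seq E -> R) (u : V) : R :=
  minseq [seq bneck c s t f q | q <- spaths s u].

Definition prefix (s : V) (p : seq E) (u : V) : seq E :=
  take (index u (verts s p)) p.

Definition is_subpath_optimal_Nash (c : E -> R -> R) (s t : V) (r : R)
    (f : seq E -> R) : Prop :=
  is_Nash c s t r f /\
  forall u p, p \in spaths s t -> 0 < f p -> u \in verts s p ->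
    bneck c s t f (prefix s p u) = bf c s t f u.

Definition routing_game (c : E -> R -> R) (r : R) : Prop :=
  0 < r /\ forall e,
   [/\ ({within [set x : R | (0 <= x <= r)%R], continuous (c e)})%classic,
       forall x y, 0 <= x -> x <= y -> y <= r -> c e x <= c e y
     & forall x, 0 <= x -> x <= r -> 0 <= c e x].

End Bottleneck.

From Pilot Require Import Defs.
From HB Require Import structures.
From mathcomp Require Import all_boot all_order all_algebra.
From mathcomp Require Import all_classical all_reals all_analysis.
Import Order.TTheory GRing.Theory Num.Theory numFieldNormedType.Exports.
Local Open Scope ring_scope.
Set Implicit Arguments. Unset Strict Implicit. Unset Printing Implicit Defensive.

(* Let B = B(f) > 0 and let S be the set of vertices u with b_f(u) < B. The
   Nash property keeps t out of S, so every s-t path crosses the cut out of S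
   and any feasible flow g sends at least r across it. Subpath optimality makes
   b_f nondecreasing along every path used by f, so such a path crosses the cut
   exactly once and f sends at most r across it. Hence some cut edge e has
   0 < g_e and f_e <= g_e. A cut edge costs at least B under f (extend a cheap
   s-(src e) path by e), so by monotonicity c_e(g_e) >= B on a path used by g. *)

Section Walks.
Variables (V E : finType) (src tgt : E -> V).

Local Notation walk := (walk src tgt).
Local Notation simple_path := (simple_path src tgt).
Local Notation spaths := (spaths src tgt).
Local Notation verts := (verts tgt).
Local Notation prefix := (Defs.prefix tgt).

Lemma walk_cat x y a b :
  walk x y (a ++ b) =
  walk x (last x (map tgt a)) a && walk (last x (map tgt a)) y b.
Proof.
elim: a x => [|e a IH] x /=; first by rewrite eqxx.
by rewrite IH andbA.
Qed.

Lemma walk_last x y p : walk x y p -> last x (map tgt p) = y.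
Proof.
elim: p x => [|e p IH] x /=; first by move/eqP.
by case/andP=> _; apply: IH.
Qed.

Lemma walk_prefix x y p u :
  walk x y p -> u \in verts x p -> walk x u (prefix x p u).
Proof.
rewrite /Defs.prefix /verts.
elim: p x => [|e p IH] x /=.
  by move=> _; rewrite inE => /eqP ->; rewrite eqxx.
case/andP=> /eqP src_e walk_p; case: eqP => [->|ux]; first by rewrite /= eqxx.
case/predU1P => [/esym/ux []|u_p] /=.
by rewrite src_e eqxx (IH _ walk_p).
Qed.

Lemma mem_spaths x y p : (p \in spaths x y) = simple_path x y p.
Proof.
rewrite /spaths mem_undup mem_filter andb_idr // => /andP[_ uniq_verts].
have uniq_p : uniq p by move: uniq_verts => /andP[_ /map_uniq].
have size_p : (size p <= #|E|)%N by rewrite -(card_uniqP uniq_p) max_card.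
apply/flattenP; exists [seq tval t | t : (size p).-tuple E].
  by apply/mapP; exists (size p); rewrite ?mem_iota.
by apply/mapP; exists (in_tuple p); rewrite ?mem_enum.
Qed.

Lemma simple_path_prefix x y p u :
  simple_path x y p -> u \in verts x p -> simple_path x u (prefix x p u).
Proof.
move=> /andP[walk_p uniq_p] u_p; rewrite /simple_path (walk_prefix walk_p u_p) /=.
by rewrite /Defs.prefix /verts map_take; apply: (take_uniq _.+1 uniq_p).
Qed.

Lemma simple_path_rcons x p e :
  simple_path x (src e) p -> tgt e \notin verts x p ->
  simple_path x (tgt e) (rcons p e).
Proof.
move=> /andP[walk_p uniq_p] new_tgt; rewrite /simple_path.
have -> : verts x (rcons p e) = rcons (verts x p) (tgt e) by rewrite /verts map_rcons.
rewrite rcons_uniq new_tgt uniq_p -cats1 walk_cat (walk_last walk_p).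
by rewrite walk_p /= !eqxx.
Qed.

Lemma prefix_cat x a b :
  uniq (verts x (a ++ b)) -> prefix x (a ++ b) (last x (map tgt a)) = a.
Proof.
rewrite /Defs.prefix /verts map_cat -cat_cons cat_uniq => /andP[uniq_a _].
have last_a : last x (map tgt a) \in x :: map tgt a by rewrite mem_last.
have index_last : index (last x (map tgt a)) (x :: map tgt a) = size a.
  by rewrite (last_nth x) index_uniq //= size_map.
by rewrite index_cat last_a index_last take_size_cat.
Qed.

Lemma walk_crosses (P : pred V) x y p :
  walk x y p -> P x -> ~~ P y -> exists2 e, e \in p & P (src e) && ~~ P (tgt e).
Proof.
elim: p x => [|e p IH] x /=; first by move=> /eqP -> ->.
case/andP=> /eqP src_e walk_p Px Py.
have [Pe|nPe] := boolP (P (tgt e)).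
  have [e' e'_p cross] := IH _ walk_p Pe Py.
  by exists e'; rewrite ?inE ?e'_p ?orbT.
by exists e; rewrite ?inE ?eqxx // src_e Px.
Qed.

End Walks.

Lemma minseq_le (R : realType) (l : seq R) x : x \in l -> minseq l <= x.
Proof.
rewrite /minseq; move: (head 0 l) => a.
elim: l => [|y l IH] //=; rewrite inE => /orP[/eqP->|x_l].
  by rewrite ge_min lexx.
by rewrite ge_min IH ?orbT.
Qed.

Lemma exists_pos_ge_of_sum_le (R : realDomainType) (I : finType) (P : pred I)
    (a b : I -> R) (r : R) :
  0 < r -> (forall i, 0 <= a i) ->
  \sum_(i | P i) a i <= r -> r <= \sum_(i | P i) b i ->
  exists i, [/\ P i, 0 < b i & a i <= b i].
Proof.
move=> r_gt0 a_ge0 sum_a sum_b.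
have [i /and3P[]|none] := pickP [pred i | [&& P i, 0 < b i & a i <= b i]].
  by exists i.
have b_lt_a i : P i -> 0 < b i -> b i < a i.
  by move=> Pi b_i; move: (none i); rewrite /= Pi b_i /= ltNge => ->.
have [i0 /andP[Pi0 b_i0]|b_le0] := pickP [pred i | P i && (0 < b i)].
  have : \sum_(i | P i) b i < \sum_(i | P i) a i.
    rewrite (bigD1 i0) //= [X in _ < X](bigD1 i0) //=.
    apply: ltr_leD; first exact: b_lt_a.
    apply: ler_sum => i /andP[Pi _]; have [b_i|b_le0] := ltP 0 (b i).
      by rewrite ltW ?b_lt_a.
    exact: le_trans b_le0 (a_ge0 i).
  by rewrite ltNge (le_trans sum_a sum_b).
have : r <= 0.
  apply: le_trans sum_b (sumr_le0 _ _) => i Pi.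
  by move: (b_le0 i); rewrite /= Pi /= leNgt => ->.
by rewrite leNgt r_gt0.
Qed.

Section Bottlenecks.
Variables (V E : finType) (src tgt : E -> V) (R : realType).
Variables (c : E -> R -> R) (s t : V).
Implicit Types (f g : seq E -> R) (r : R) (p q : seq E).

Local Notation spaths := (spaths src tgt).
Local Notation eload := (eload src tgt s t).
Local Notation bneck := (bneck src tgt c s t).
Local Notation Bcost := (Bcost src tgt c s t).
Local Notation is_flow := (is_flow src tgt s t).

Lemma bneck_ge0 f q : 0 <= bneck f q.
Proof.
rewrite /Defs.bneck; elim: q => [|e q IH]; first by rewrite big_nil.
by rewrite big_cons le_max IH orbT.
Qed.

Lemma bneck_cat f a b : bneck f (a ++ b) = Num.max (bneck f a) (bneck f b).
Proof.
elim: a => [|e a IH] /=.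
  by rewrite {2}/Defs.bneck big_nil; apply/esym/max_idPr; apply: bneck_ge0.
by move: IH; rewrite /Defs.bneck !big_cons => ->; rewrite maxA.
Qed.

Lemma bneck_catl f a b : bneck f a <= bneck f (a ++ b).
Proof. by rewrite bneck_cat le_max lexx. Qed.

Lemma bneck_seq1 f e : bneck f [:: e] = Num.max (c e (eload f e)) 0.
Proof. by rewrite /Defs.bneck big_cons big_nil. Qed.

Lemma le_bneck f q e : e \in q -> c e (eload f e) <= bneck f q.
Proof. by move=> e_q; apply: (le_bigmax_seq _ _ xpredT). Qed.

Lemma Bcost_ge0 f : 0 <= Bcost f.
Proof.
rewrite /Defs.Bcost; elim: (spaths s t) => [|p l IH]; first by rewrite big_nil.
by rewrite big_cons; case: ifP => // _; rewrite le_max IH orbT.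
Qed.

Lemma bneck_le_Bcost f p : p \in spaths s t -> 0 < f p -> bneck f p <= Bcost f.
Proof. by move=> p_st f_p; apply: (le_bigmax_seq _ _ (fun p => 0 < f p)). Qed.

Lemma eload_ge0 r f e : is_flow r f -> 0 <= eload f e.
Proof. by case=> f_ge0 _ _; apply: sumr_ge0. Qed.

Lemma eload_le r f e : is_flow r f -> eload f e <= r.
Proof.
case=> f_ge0 _ <-; rewrite /Defs.eload [X in _ <= X](bigID (fun p => e \in p)) /=.
by rewrite lerDl sumr_ge0.
Qed.

Lemma cost_le_Bcost r g e :
  is_flow r g -> 0 < eload g e -> c e (eload g e) <= Bcost g.
Proof.
move=> g_flow; have [/hasP[p p_st /andP[e_p g_p]] _|] :=
  boolP (has (fun p => (e \in p) && (0 < g p)) (spaths s t)).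
  exact: le_trans (le_bneck g e_p) (bneck_le_Bcost p_st g_p).
move=> /hasPn no_path; rewrite ltNge /Defs.eload big_seq_cond sumr_le0 //.
by move=> p /andP[p_st e_p]; move: (no_path p p_st); rewrite e_p leNgt.
Qed.

Lemma Nash_Bcost_le r f q :
  is_Nash src tgt c s t r f -> q \in spaths s t -> Bcost f <= bneck f q.
Proof.
case=> [[_ f_out _] Nash] q_st; apply: bigmax_le; first exact: bneck_ge0.
move=> p f_p; apply: Nash => //; apply: contraTT f_p => p_out.
by rewrite f_out ?ltxx.
Qed.

End Bottlenecks.

Section CutFlow.
Variables (V E : finType) (src tgt : E -> V) (R : realType) (s t : V).
Variables (r : R) (h : seq E -> R) (C : pred E).
Hypothesis h_flow : is_flow src tgt s t r h.

Local Notation spaths := (spaths src tgt).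
Local Notation eload := (eload src tgt s t).

Lemma sum_eload_cut :
  \sum_(e | C e) eload h e =
  \sum_(p <- spaths s t) h p *+ #|[pred e | C e & e \in p]|.
Proof.
rewrite /Defs.eload; under eq_bigr do rewrite big_mkcond.
rewrite exchange_big; apply: eq_bigr => p _.
by rewrite -big_mkcondr sumr_const.
Qed.

Lemma cut_flow_ge :
  (forall p, p \in spaths s t -> has C p) -> r <= \sum_(e | C e) eload h e.
Proof.
move=> crossing; have [h_ge0 _ <-] := h_flow.
rewrite sum_eload_cut [X in X <= _]big_seq [X in _ <= X]big_seq.
apply: ler_sum => p /crossing /hasP[e e_p Ce].
rewrite -[X in X <= _]mulr1n ler_wpMn2l //.
by apply/card_gt0P; exists e; rewrite inE Ce.
Qed.

Lemma cut_flow_le :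
  (forall p, p \in spaths s t -> 0 < h p -> (#|[pred e | C e & e \in p]| <= 1)%N) ->
  \sum_(e | C e) eload h e <= r.
Proof.
move=> crossing_once; have [h_ge0 _ <-] := h_flow.
rewrite sum_eload_cut [X in X <= _]big_seq [X in _ <= X]big_seq.
apply: ler_sum => p p_st; have [h_p|h_p] := ltP 0 (h p).
  by rewrite -[X in _ <= X]mulr1n ler_wpMn2l ?crossing_once ?ltW.
by have -> : h p = 0 by apply/eqP; rewrite eq_le h_p h_ge0.
Qed.

End CutFlow.

Section SubpathOptimalNash.
Variables (V E : finType) (src tgt : E -> V) (R : realType).
Variables (c : E -> R -> R) (s t : V) (r : R) (f : seq E -> R).
Hypothesis f_spo : is_subpath_optimal_Nash src tgt c s t r f.

Local Notation spaths := (spaths src tgt).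
Local Notation verts := (verts tgt).
Local Notation bneck := (bneck src tgt c s t f).
Local Notation B := (Bcost src tgt c s t f).

Definition below_Bcost u := has (fun q => bneck q < B) (spaths s u).

Definition cut_edge e := below_Bcost (src e) && ~~ below_Bcost (tgt e).

Lemma below_Bcost_src : 0 < B -> below_Bcost s.
Proof.
move=> B_gt0; apply/hasP; exists [::]; last by rewrite /Defs.bneck big_nil.
by rewrite mem_spaths /simple_path /= eqxx.
Qed.

Lemma below_Bcost_tgt : ~~ below_Bcost t.
Proof.
apply/hasPn => q q_st; rewrite -leNgt.
exact: Nash_Bcost_le f_spo.1 q_st.
Qed.

Lemma below_Bcost_used_prefix p a b :
  p \in spaths s t -> 0 < f p -> p = a ++ b ->
  below_Bcost (last s (map tgt a)) = (bneck a < B).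
Proof.
move=> p_st f_p def_p; set u := last s (map tgt a).
have p_simple := p_st; rewrite mem_spaths in p_simple.
have u_p : u \in verts s p by rewrite def_p /verts map_cat -cat_cons mem_cat mem_last.
have prefix_p : Defs.prefix tgt s p u = a.
  by rewrite def_p prefix_cat // -def_p; case/andP: p_simple.
have a_su : a \in spaths s u.
  by rewrite mem_spaths -prefix_p (simple_path_prefix p_simple u_p).
have bneck_a : bneck a = bf src tgt c s t f u.
  by rewrite -prefix_p f_spo.2.
apply/hasP/idP => [[q q_su q_lt]|a_lt]; last by exists a.
rewrite bneck_a; apply: le_lt_trans q_lt.
exact/minseq_le/map_f.
Qed.

Lemma no_cut_edge_after_cut_edge p a e b e' :
  p \in spaths s t -> 0 < f p -> p = a ++ e :: b ->
  cut_edge e -> e' \in b -> ~~ cut_edge e'.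
Proof.
move=> p_st f_p def_p /andP[_ tgt_e_high] e'_b.
case/splitPr: e'_b def_p => b1 b2 def_p.
have def_p1 : p = (a ++ [:: e]) ++ b1 ++ e' :: b2 by rewrite def_p -catA.
have def_p2 : p = (a ++ e :: b1) ++ e' :: b2 by rewrite def_p -catA.
have src_e' : src e' = last s (map tgt (a ++ e :: b1)).
  move: p_st; rewrite mem_spaths def_p2 => /andP[+ _].
  by rewrite walk_cat => /andP[_ /andP[/eqP]].
have B_le : B <= bneck (a ++ [:: e]).
  by rewrite leNgt -(below_Bcost_used_prefix p_st f_p def_p1) map_cat last_cat.
rewrite /cut_edge src_e' (below_Bcost_used_prefix p_st f_p def_p2) negb_and -leNgt.
rewrite (le_trans B_le) // -[a ++ e :: b1]/(a ++ [:: e] ++ b1) catA.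
exact: bneck_catl.
Qed.

Lemma used_path_cut_edges_le1 p :
  p \in spaths s t -> 0 < f p -> (#|[pred e | cut_edge e & e \in p]| <= 1)%N.
Proof.
move=> p_st f_p; apply/card_le1_eqP => e1 e2.
rewrite !inE => /andP[cut_e1 e1_p] /andP[cut_e2 e2_p].
have [a [b def_p]] : exists a b, p = a ++ e1 :: b.
  by case/splitPr: e1_p => a b; exists a, b.
move: e2_p; rewrite def_p mem_cat inE => /or3P[e2_a|/eqP //|e2_b].
  have [a1 [a2 def_a]] : exists a1 a2, a = a1 ++ e2 :: a2.
    by case/splitPr: e2_a => a1 a2; exists a1, a2.
  have def_p' : p = a1 ++ e2 :: (a2 ++ e1 :: b) by rewrite def_p def_a -catA.
  have e1_later : e1 \in a2 ++ e1 :: b by rewrite mem_cat mem_head orbT.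
  have := no_cut_edge_after_cut_edge p_st f_p def_p' cut_e2 e1_later.
  by rewrite cut_e1.
have := no_cut_edge_after_cut_edge p_st f_p def_p cut_e1 e2_b.
by rewrite cut_e2.
Qed.

Lemma spath_has_cut_edge : 0 < B -> forall p, p \in spaths s t -> has cut_edge p.
Proof.
move=> B_gt0 p; rewrite mem_spaths => /andP[walk_p _].
have [e e_p cut_e] := walk_crosses walk_p (below_Bcost_src B_gt0) below_Bcost_tgt.
by apply/hasP; exists e.
Qed.

Lemma cut_edge_cost e : 0 < B -> cut_edge e -> B <= c e (eload src tgt s t f e).
Proof.
move=> B_gt0 /andP[/hasP[q q_se q_lt] tgt_e_high].
have q_simple := q_se; rewrite mem_spaths in q_simple.
have [tgt_e_q|tgt_e_new] := boolP (tgt e \in verts s q).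
  case/negP: tgt_e_high; apply/hasP; exists (Defs.prefix tgt s q (tgt e)).
    by rewrite mem_spaths (simple_path_prefix q_simple tgt_e_q).
  apply: le_lt_trans q_lt.
  rewrite -[X in _ <= bneck X](cat_take_drop (index (tgt e) (verts s q)) q).
  exact: bneck_catl.
have qe_se : rcons q e \in spaths s (tgt e).
  by rewrite mem_spaths (simple_path_rcons q_simple tgt_e_new).
move/hasPn: tgt_e_high => /(_ _ qe_se); rewrite -leNgt -cats1 bneck_cat bneck_seq1.
by rewrite !le_max leNgt q_lt /= [B <= 0]leNgt B_gt0 orbF.
Qed.

End SubpathOptimalNash.

Theorem proposition3 (V E : finType) (src tgt : E -> V) (s t : V)
    (R : realType) (c : E -> R -> R) (r : R) (f : seq E -> R) :
  routing_game c r ->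
  is_subpath_optimal_Nash src tgt c s t r f ->
  is_flow src tgt s t r f /\
  forall g : seq E -> R, is_flow src tgt s t r g ->
    Bcost src tgt c s t f <= Bcost src tgt c s t g.
Proof.
move=> [r_gt0 game] f_spo; have [[f_flow _] _] := f_spo; split=> // g g_flow.
have [B_le0|B_gt0] := leP (Bcost src tgt c s t f) 0.
  exact: le_trans B_le0 (Bcost_ge0 _ _ _ _ _ _).
have [e [cut_e g_e f_le_g]] := exists_pos_ge_of_sum_le r_gt0
  (fun e => eload_ge0 e f_flow)
  (cut_flow_le f_flow (used_path_cut_edges_le1 f_spo))
  (cut_flow_ge g_flow (spath_has_cut_edge f_spo B_gt0)).
apply: le_trans (cut_edge_cost B_gt0 cut_e) _.
apply: le_trans (cost_le_Bcost c g_flow g_e); have [_ cost_mono _] := game e.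
exact: cost_mono (eload_ge0 _ f_flow) f_le_g (eload_le _ g_flow).
Qed.
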